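(* Let $p(L,M,D;\mu)$ be a generative reasoning model. For every finite $\Delta\subseteq L$, $[\![\Delta]\!]_p^{\max}\neq\emptyset$.
   Context: A generative reasoning model is given by the following data: - a multiset of data $\{d_1,\dots,d_K\}$ with $K\ge1$; - a propositional language $L$ over finitely many atoms, with set of models (truth assignments) $\mathcal M$; - a function $m:\{d_1,\dots,d_K\}\to\mathcal M$ assigning to each datum the model it supports. The induced probability of a model $n$ is $p(n)=|\{k:m(d_k)=n\}|/K$. Notation and definitions: - For $S\subseteq L$, $[\![S]\!]$ is the set of models satisfying every formula of $S$, and $[\![S]\!]_p=\{m\in[\![S]\!]:p(m)\neq0\}$. - A subset $S\subseteq\Delta$ is a maximal possible subset of $\Delta$ if $[\![S]\!]_p\neq\emptyset$ and $[\![S\cup\{\alpha\}]\!]_p=\emptyset$ for all $\alpha\in\Delta\setminus S$. - A cardinality-maximal possible subset is a maximal possible subset of maximum cardinality. - $MPS(\Delta)$ is the set of cardinality-maximal possible subsets of $\Delta$, and $[\![\Delta]\!]_p^{\max}=\bigcup_{S\in MPS(\Delta)}[\![S]\!]_p$. *)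

From HB Require Import structures.
From mathcomp Require Import all_boot all_algebra.
From mathcomp Require Import finmap.
Set Implicit Arguments. Unset Strict Implicit. Unset Printing Implicit Defensive.
Import GRing.Theory Num.Theory.
Local Open Scope fset_scope.

Inductive pform (A : Type) :=
| Var of A | Top | Bot | Neg of pform A
| And of pform A & pform A | Or of pform A & pform A | Imp of pform A & pform A.
Arguments Top {A}. Arguments Bot {A}.

Section FormCount.
Variable A : countType.
Fixpoint enc (f : pform A) : GenTree.tree A :=
  match f with
  | Var a => GenTree.Leaf a
  | Top => GenTree.Node 0 [::]
  | Bot => GenTree.Node 1 [::]
  | Neg g => GenTree.Node 2 [:: enc g]
  | And g h => GenTree.Node 3 [:: enc g; enc h]
  | Or g h => GenTree.Node 4 [:: enc g; enc h]
  | Imp g h => GenTree.Node 5 [:: enc g; enc h]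
  end.
Fixpoint dec (t : GenTree.tree A) : option (pform A) :=
  match t with
  | GenTree.Leaf a => Some (Var a)
  | GenTree.Node 0 [::] => Some Top
  | GenTree.Node 1 [::] => Some Bot
  | GenTree.Node 2 [:: t1] => omap (@Neg A) (dec t1)
  | GenTree.Node 3 [:: t1; t2] =>
      if dec t1 is Some g then omap (And g) (dec t2) else None
  | GenTree.Node 4 [:: t1; t2] =>
      if dec t1 is Some g then omap (Or g) (dec t2) else None
  | GenTree.Node 5 [:: t1; t2] =>
      if dec t1 is Some g then omap (Imp g) (dec t2) else None
  | _ => None
  end.
Lemma encK : pcancel enc dec.
Proof. by elim=> //= [g -> | g -> h -> | g -> h -> | g -> h ->]. Qed.
HB.instance Definition _ := Countable.copy (pform A) (pcan_type encK).
End FormCount.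

Section GRM.
Variable A : finType.

Definition model := {ffun A -> bool}.

Fixpoint sat (n : model) (f : pform A) : bool :=
  match f with
  | Var a => n a
  | Top => true
  | Bot => false
  | Neg g => ~~ sat n g
  | And g h => sat n g && sat n h
  | Or g h => sat n g || sat n h
  | Imp g h => sat n g ==> sat n h
  end.

(* Generative reasoning model: K data d_1..d_K (indexed by 'I_K, so repetitions
   are allowed, i.e. a multiset), each datum supporting the model m (d k). *)
Variables (D : Type) (K : nat) (d : 'I_K -> D) (m : D -> model).

Definition prob (n : model) : rat :=
  ((#|[set k : 'I_K | m (d k) == n]|)%:R / K%:R)%R.

Definition sem (S : {fset pform A}) : {set model} :=
  [set n | [forall f : S, sat n (val f)]].

Definition sem_p (S : {fset pform A}) : {set model} :=
  [set n in sem S | (prob n != 0)%R].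

Definition maximal_possible (Delta S : {fset pform A}) : Prop :=
  S `<=` Delta /\ sem_p S != set0 /\
  forall a, a \in Delta -> a \notin S -> sem_p (a |` S) = set0.

Definition card_max_possible (Delta S : {fset pform A}) : Prop :=
  maximal_possible Delta S /\
  forall S', maximal_possible Delta S' -> (#|` S'| <= #|` S|)%N.

Definition in_sem_p_max (Delta : {fset pform A}) (n : model) : Prop :=
  exists S, card_max_possible Delta S /\ n \in sem_p S.
End GRM.

From HB Require Import structures.
From mathcomp Require Import all_boot all_algebra.
From mathcomp Require Import finmap.
Set Implicit Arguments. Unset Strict Implicit. Unset Printing Implicit Defensive.
Import GRing.Theory Num.Theory.
Local Open Scope fset_scope.

(* Since K > 0, the model of any datum has positive probability, so the empty
   set is possible.  A possible subset of Delta of maximum cardinality exists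
   because Delta is finite, and it is automatically maximal: adding a formula
   outside it would give a larger possible subset. *)

Lemma ex_card_max_fsubset (T : choiceType) (Delta S0 : {fset T})
    (P : pred {fset T}) :
  S0 `<=` Delta -> P S0 ->
  exists S, [/\ S `<=` Delta, P S &
    forall S', S' `<=` Delta -> P S' -> (#|` S'| <= #|` S|)%N].
Proof.
move=> sS0D PS0.
pose has_card k := has (fun S => P S && (#|` S| == k)) (fpowerset Delta).
have has_card_S S : S `<=` Delta -> P S -> has_card #|` S|.
  by move=> sSD PS; apply/hasP; exists S; rewrite ?fpowersetE ?PS ?eqxx.
have has_card_le k : has_card k -> (k <= #|` Delta|)%N.
  by move=> /hasP[S]; rewrite fpowersetE => /fsubset_leq_card le /andP[_ /eqP<-].
have ex_card : exists k, has_card k by exists #|` S0|; apply: has_card_S.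
have [k /hasP[S]] := ex_maxnP ex_card has_card_le.
rewrite fpowersetE => sSD /andP[PS /eqP cardS] k_max.
exists S; split=> // S' sS'D PS'.
by rewrite cardS; apply/k_max/has_card_S.
Qed.

Section PossibleSubsets.
Variables (A : finType) (D : Type) (K : nat) (d : 'I_K -> D) (m : D -> model A).

Lemma prob_datum_neq0 (k : 'I_K) : prob d m (m (d k)) != 0%R.
Proof.
rewrite /prob mulf_neq0 // ?invr_eq0 pnatr_eq0 -lt0n.
  by rewrite card_gt0; apply/set0Pn; exists k; rewrite inE.
exact: leq_ltn_trans (leq0n k) (ltn_ord k).
Qed.

Lemma sem_p_fset0_neq0 (k : 'I_K) : sem_p d m fset0 != set0.
Proof.
apply/set0Pn; exists (m (d k)).
rewrite !inE prob_datum_neq0 andbT.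
by apply/forallP => -[f f0]; have := f0; rewrite in_fset0.
Qed.

Definition possible_subset (Delta S : {fset pform A}) : bool :=
  (S `<=` Delta) && (sem_p d m S != set0).

Lemma card_max_possible_of_max (Delta S : {fset pform A}) :
  possible_subset Delta S ->
  (forall S', possible_subset Delta S' -> (#|` S'| <= #|` S|)%N) ->
  card_max_possible d m Delta S.
Proof.
move=> /andP[sSD neS] S_max.
have S_maximal : maximal_possible d m Delta S.
  split=> //; split=> // a aD aS; apply/eqP/negP => /negP ne_aS.
  have : possible_subset Delta (a |` S).
    by rewrite /possible_subset ne_aS fsubUset fsub1set aD sSD.
  by move/S_max; rewrite cardfsU1 aS ltnn.
split=> // S' [sS'D [neS' _]].
by apply: S_max; rewrite /possible_subset sS'D neS'.
Qed.

End PossibleSubsets.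

Theorem lemma2 (A : finType) (D : Type) (K : nat) (hK : (0 < K)%N)
    (d : 'I_K -> D) (m : D -> model A) (Delta : {fset pform A}) :
  exists n : model A, in_sem_p_max d m Delta n.
Proof.
have possible0 : possible_subset d m Delta fset0.
  by rewrite /possible_subset fsub0set (sem_p_fset0_neq0 d m (Ordinal hK)).
have [S [_ PS S_max]] := ex_card_max_fsubset (fsub0set Delta) possible0.
have S_card_max : card_max_possible d m Delta S.
  apply: card_max_possible_of_max => // S' PS'.
  by apply: S_max => //; case/andP: PS'.
have /andP[_ /set0Pn[n nS]] := PS.
by exists n, S.
Qed.
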